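(* Let $n\ge 3$ and let $\sigma$ be a maximal simplex of $\mathcal{VR}(\mathbb{I}_n;2)$. Then one of the following holds: (i) $\sigma = N[v]$ for some $v\in V(\mathbb{I}_n)$; (ii) $\sigma=\{v,v^{i_0},v^{j_0},v^{i_0,j_0}\}$ for some $v\in V(\mathbb{I}_n)$ and distinct $i_0,j_0\in[n]$; (iii) $\sigma = K_v^{i_0,j_0,k_0}$ for some $v\in V(\mathbb{I}_n)$ and distinct $i_0,j_0,k_0\in[n]$.
   Context: $\mathbb{I}_n$ is the $n$-dimensional hypercube graph on vertex set $\{0,1\}^n$ (adjacent iff differing in exactly one coordinate), with Hamming distance $d(v,w)=\#\{i: v(i)\ne w(i)\}$, where $v(i)$ is the $i$-th coordinate. $\mathcal{VR}(X;r)$ is the simplicial complex of finite subsets of the metric space $X$ of diameter at most $r$. $[n]=\{1,\dots,n\}$. For a vertex $v$ and distinct $i_1,\dots,i_k\in[n]$, $v^{i_1,\dots,i_k}$ is the vertex obtained from $v$ by changing coordinates $i_1,\dots,i_k$ (and only those). $N(v)=\{v^i:i\in[n]\}$ and $N[v]=N(v)\cup\{v\}$. For distinct $i,j,k\in[n]$, $K_v^{i,j,k}=\{v,v^{i,j},v^{j,k},v^{i,k}\}$. *)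

From mathcomp Require Import all_boot.
Set Implicit Arguments. Unset Strict Implicit. Unset Printing Implicit Defensive.

Definition vertex (n : nat) := {ffun 'I_n -> bool}.

Definition hdist n (v w : vertex n) : nat := #|[set i | v i != w i]|.

(* v^{S}: change exactly the coordinates in S. *)
Definition flip n (v : vertex n) (S : {set 'I_n}) : vertex n :=
  [ffun i => if i \in S then ~~ v i else v i].

Definition closed_nbhd n (v : vertex n) : {set vertex n} :=
  v |: [set flip v [set i] | i : 'I_n].

Definition Kv n (v : vertex n) (i j k : 'I_n) : {set vertex n} :=
  [set v; flip v [set i; j]; flip v [set j; k]; flip v [set i; k]].

Definition VR_simplex n (r : nat) (s : {set vertex n}) : Prop :=
  s != set0 /\ (forall v w, v \in s -> w \in s -> hdist v w <= r).

Definition VR_maximal_simplex n (r : nat) (s : {set vertex n}) : Prop :=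
  VR_simplex r s /\ (forall t, VR_simplex r t -> s \subset t -> t = s).

From mathcomp Require Import all_boot zify.
Set Implicit Arguments. Unset Strict Implicit. Unset Printing Implicit Defensive.

(* Fix a vertex v of sigma and encode every vertex t by the set D(t) of
   coordinates where it differs from v, so that d(v, t) = |D(t)| <= 2 and
   d(v^S, t) = |S| + |D(t)| - 2 |S ∩ D(t)|.  Either sigma ⊆ N[v]; or some w has
   D(w) = {x, y} and either every D(t) ⊆ {x, y} (sigma is a square), or some u
   has D(u) = {x, z} with z new.  In the last case a vertex t with x ∉ D(t) ≠ ∅
   must meet both {x, y} and {x, z}, hence D(t) = {y, z} and sigma ⊆ K_v^{x,y,z};
   if there is none, every vertex is within distance 1 of v^x.  Maximality turns
   each inclusion into an equality. *)

Section FinSetFacts.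
Variable T : finType.
Implicit Types (A : {set T}) (x y z : T).

Lemma set1I x A : [set x] :&: A = if x \in A then [set x] else set0.
Proof.
case: ifP => xA; first by apply/setIidPl; rewrite sub1set.
by apply: disjoint_setI0; rewrite disjoints1 xA.
Qed.

Lemma cards1I x A : #|[set x] :&: A| = (x \in A).
Proof. by rewrite set1I; case: (x \in A); rewrite ?cards1 ?cards0. Qed.

Lemma cards2I x y A : x != y -> #|[set x; y] :&: A| = (x \in A) + (y \in A).
Proof.
move=> xy; rewrite setIUl cardsU !cards1I !set1I.
case: (x \in A); case: (y \in A); rewrite ?set0I ?setI0 ?cards0 ?subn0 //.
by rewrite disjoint_setI0 ?cards0 // disjoints1 inE.
Qed.

Lemma cards3_le x y z : #|[set x; y; z]| <= 3.
Proof.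
apply: leq_trans (leq_card_setU _ _) _; rewrite cards1 addn1 ltnS.
by apply: leq_trans (leq_card_setU _ _) _; rewrite !cards1.
Qed.

Lemma set2_eq x y A : x != y -> x \in A -> y \in A -> #|A| <= 2 -> A = [set x; y].
Proof.
move=> xy xA yA le2; apply/eqP; rewrite eq_sym eqEcard subUset !sub1set xA yA.
by rewrite cards2 xy.
Qed.

Lemma set_meeting_pairs A x y z : [/\ x != y, y != z & x != z] -> #|A| <= 2 ->
  #|A| <= 2 * ((x \in A) + (y \in A)) ->
  #|A| <= 2 * ((x \in A) + (z \in A)) ->
  #|A| <= 2 * ((y \in A) + (z \in A)) ->
  [\/ A = set0, A = [set x; y], A = [set y; z] | A = [set x; z]].
Proof.
move=> [xy yz xz] le2; have A0 : #|A| <= 0 -> A = set0 by rewrite leqn0 => /eqP/cards0_eq.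
case ex: (x \in A); case ey: (y \in A); case ez: (z \in A) => //= h1 h2 h3;
  by [ apply: Or42; exact: set2_eq | apply: Or43; exact: set2_eq
     | apply: Or44; exact: set2_eq | apply: Or41; apply: A0; lia ].
Qed.

End FinSetFacts.

Section Hypercube.
Variable n : nat.
Implicit Types (v a b t : vertex n) (S : {set 'I_n}) (x y z : 'I_n).

Definition diffset v a : {set 'I_n} := [set i | v i != a i].

Lemma hdistE v a : hdist v a = #|diffset v a|. Proof. by []. Qed.

Lemma diffset_id v : diffset v v = set0.
Proof. by apply/setP => i; rewrite !inE eqxx. Qed.

Lemma diffset_flip v S : diffset v (flip v S) = S.
Proof. by apply/setP => i; rewrite !inE ffunE; case: (i \in S); case: (v i). Qed.

Lemma flip_diffset v a : flip v (diffset v a) = a.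
Proof. by apply/ffunP => i; rewrite ffunE inE; case: (v i); case: (a i). Qed.

Lemma flip_set0 v : flip v set0 = v.
Proof. by apply/ffunP => i; rewrite ffunE inE. Qed.

Lemma hdist_flip v S t :
  hdist (flip v S) t + 2 * #|S :&: diffset v t| = #|S| + hdist v t.
Proof.
have -> : hdist (flip v S) t = #|(S :|: diffset v t) :\: (S :&: diffset v t)|.
  apply: eq_card => i; rewrite !inE ffunE.
  by case: (i \in S); case: (v i); case: (t i).
have sIU : S :&: diffset v t \subset S :|: diffset v t.
  exact: subset_trans (subsetIl _ _) (subsetUl _ _).
rewrite cardsD (setIidPr sIU) hdistE.
have := cardsUI S (diffset v t); have := subset_leq_card sIU; lia.
Qed.

Lemma hdist_flip_flip v S1 S2 :
  hdist (flip v S1) (flip v S2) + 2 * #|S1 :&: S2| = #|S1| + #|S2|.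
Proof. by have := hdist_flip v S1 (flip v S2); rewrite [hdist v _]hdistE !diffset_flip. Qed.

Lemma hdist_flip_sub v S1 S2 (U : {set 'I_n}) : S1 \subset U -> S2 \subset U ->
  hdist (flip v S1) (flip v S2) + #|S1 :&: S2| <= #|U|.
Proof.
move=> sub1 sub2; have := hdist_flip_flip v S1 S2; have := cardsUI S1 S2.
have : #|S1 :|: S2| <= #|U| by apply: subset_leq_card; rewrite subUset sub1 sub2.
lia.
Qed.

Lemma hdist_triangle v a b : hdist a b <= hdist v a + hdist v b.
Proof. by have := hdist_flip v (diffset v a) b; rewrite flip_diffset -hdistE; lia. Qed.

Lemma mem_closed_nbhd v t : (t \in closed_nbhd v) = (hdist v t <= 1).
Proof.
apply/setU1P/idP => [[->|/imsetP [i _ ->]] | ].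
- by rewrite hdistE diffset_id cards0.
- by rewrite hdistE diffset_flip cards1.
rewrite hdistE leq_eqVlt ltnS leqn0 => /orP [/cards1P [i Di] | /eqP/cards0_eq D0].
  by right; apply/imsetP; exists i; rewrite // -Di flip_diffset.
by left; rewrite -(flip_diffset v t) D0 flip_set0.
Qed.

Lemma VR_closed_nbhd v : VR_simplex 2 (closed_nbhd v).
Proof.
split; first by apply/set0Pn; exists v; rewrite mem_closed_nbhd hdistE diffset_id cards0.
move=> a b; rewrite !mem_closed_nbhd => va vb.
by apply: leq_trans (hdist_triangle v a b) _; rewrite -[2]/(1 + 1) leq_add.
Qed.

Definition square v x y : {set vertex n} :=
  [set v; flip v [set x]; flip v [set y]; flip v [set x; y]].

Lemma diffset_square v x y a : a \in square v x y -> diffset v a \subset [set x; y].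
Proof.
rewrite !inE -!orbA => /or4P [] /eqP ->; rewrite ?diffset_id ?diffset_flip ?sub0set //.
- by rewrite sub1set !inE eqxx.
- by rewrite sub1set !inE eqxx orbT.
Qed.

Lemma mem_square v x y t : diffset v t \subset [set x; y] -> t \in square v x y.
Proof.
move=> /setIidPr Dt; rewrite -(flip_diffset v t) -Dt setIUl !set1I.
by case: (x \in _); case: (y \in _); rewrite ?set0U ?setU0 ?flip_set0 !inE eqxx ?orbT.
Qed.

Lemma VR_square v x y : VR_simplex 2 (square v x y).
Proof.
split; first by apply/set0Pn; exists v; rewrite !inE eqxx.
move=> a b /diffset_square Da /diffset_square Db.
rewrite -(flip_diffset v a) -(flip_diffset v b).
have := hdist_flip_sub v Da Db; rewrite cards2; case: (x != y); lia.
Qed.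

Lemma diffset_Kv v x y z a : [/\ x != y, y != z & x != z] -> a \in Kv v x y z ->
  diffset v a \subset [set x; y; z] /\ (#|diffset v a| = 0 \/ #|diffset v a| = 2).
Proof.
move=> [xy yz xz]; rewrite !inE -!orbA => /or4P [] /eqP ->.
  by rewrite diffset_id sub0set cards0; split => //; left.
all: rewrite diffset_flip cards2 ?xy ?yz ?xz; split; last by right.
all: by apply/subsetP => i; rewrite !inE => /orP [] ->; rewrite ?orbT.
Qed.

Lemma VR_Kv v x y z : [/\ x != y, y != z & x != z] -> VR_simplex 2 (Kv v x y z).
Proof.
move=> dxyz; split; first by apply/set0Pn; exists v; rewrite !inE eqxx.
move=> a b /(diffset_Kv dxyz) [Da ca] /(diffset_Kv dxyz) [Db cb].
rewrite -(flip_diffset v a) -(flip_diffset v b).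
have := leq_trans (hdist_flip_sub v Da Db) (cards3_le x y z).
have := hdist_flip_flip v (diffset v a) (diffset v b); lia.
Qed.

End Hypercube.

Section MaximalSimplex.
Variables (n : nat) (sigma : {set vertex n}).
Hypothesis sigma_max : VR_maximal_simplex 2 sigma.
Implicit Types (v a b t : vertex n) (x y z : 'I_n).

Lemma maximal_diam a b : a \in sigma -> b \in sigma -> hdist a b <= 2.
Proof. by case: sigma_max => -[_ diam] _; apply: diam. Qed.

Lemma maximal_eq (X : {set vertex n}) : VR_simplex 2 X -> sigma \subset X -> sigma = X.
Proof. by case: sigma_max => _ max_sigma X_VR /(max_sigma _ X_VR). Qed.

Variable v : vertex n.
Hypothesis v_in : v \in sigma.

Lemma card_diffset_le2 t : t \in sigma -> #|diffset v t| <= 2.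
Proof. by rewrite -hdistE; apply: maximal_diam. Qed.

Lemma diffset_meets_pair x y t : x != y -> flip v [set x; y] \in sigma -> t \in sigma ->
  #|diffset v t| <= 2 * ((x \in diffset v t) + (y \in diffset v t)).
Proof.
move=> xy s_in t_in; have := hdist_flip v [set x; y] t.
rewrite cards2I // cards2 xy [hdist v t]hdistE; have := maximal_diam s_in t_in.
(* The same atoms occur with different universe instances, which lia would
   treat as distinct; generalizing them identifies the occurrences. *)
by move: (x \in _) (y \in _) #|_| => x_in y_in c; lia.
Qed.

Lemma maximal_closed_nbhd_flip x :
  (forall t, t \in sigma -> (x \in diffset v t) || (diffset v t == set0)) ->
  sigma = closed_nbhd (flip v [set x]).
Proof.
move=> near_x; apply: maximal_eq (VR_closed_nbhd _) _; apply/subsetP => t t_in.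
rewrite mem_closed_nbhd; have := hdist_flip v [set x] t; rewrite cards1I cards1.
case/orP: (near_x t t_in) => [-> | /eqP D0].
  by have := maximal_diam v_in t_in; lia.
by rewrite [hdist v t]hdistE D0 cards0; lia.
Qed.

Lemma maximal_Kv x y z : [/\ x != y, y != z & x != z] ->
  flip v [set x; y] \in sigma -> flip v [set x; z] \in sigma ->
  flip v [set y; z] \in sigma -> sigma = Kv v x y z.
Proof.
move=> [xy yz xz] xy_in xz_in yz_in; apply: maximal_eq (VR_Kv _ _) _ => //.
apply/subsetP => t t_in; rewrite -(flip_diffset v t).
have [] := set_meeting_pairs (And3 xy yz xz) (card_diffset_le2 t_in)
  (diffset_meets_pair xy xy_in t_in) (diffset_meets_pair xz xz_in t_in)
  (diffset_meets_pair yz yz_in t_in);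
  by move=> ->; rewrite ?flip_set0 !inE eqxx ?orbT.
Qed.

Lemma maximal_closed_nbhd_or_Kv x y z : [/\ x != y, y != z & x != z] ->
  flip v [set x; y] \in sigma -> flip v [set x; z] \in sigma ->
  (exists w, sigma = closed_nbhd w) \/
  (exists w i j k, [/\ i != j, j != k & i != k] /\ sigma = Kv w i j k).
Proof.
move=> [xy yz xz] xy_in xz_in.
case: (boolP [exists t in sigma, (x \notin diffset v t) && (diffset v t != set0)]).
- case/exists_inP => t t_in /andP [xNt tN0].
  have meets p : x != p -> flip v [set x; p] \in sigma -> p \in diffset v t.
    move=> xp xp_in; have := diffset_meets_pair xp xp_in t_in; rewrite (negbTE xNt).
    by case: (p \in _) => //; rewrite muln0 leqn0 cards_eq0 (negbTE tN0).
  have Dt := set2_eq yz (meets y xy xy_in) (meets z xz xz_in) (card_diffset_le2 t_in).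
  move: t_in; rewrite -(flip_diffset v t) Dt => yz_in.
  by right; exists v, x, y, z; split; last exact: maximal_Kv.
- move/exists_inPn => near_x; left; exists (flip v [set x]).
  by apply: maximal_closed_nbhd_flip => t /near_x; rewrite negb_and !negbK.
Qed.

Lemma diffset_new_coord x y u z : x != y -> flip v [set x; y] \in sigma ->
  u \in sigma -> z \in diffset v u -> z \notin [set x; y] ->
  exists c d, [/\ [/\ c != d, d != z & c != z],
    flip v [set c; d] \in sigma & flip v [set c; z] \in sigma].
Proof.
move=> xy xy_in u_in zu; rewrite !inE negb_or => /andP [zx zy].
have [xz yz] : x != z /\ y != z by rewrite !(eq_sym _ z).
have u_le2 := card_diffset_le2 u_in; have meets := diffset_meets_pair xy xy_in u_in.
rewrite -(flip_diffset v u) in u_in.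
case: (boolP (x \in diffset v u)) => [xu | xNu].
  by exists x, y; rewrite -(set2_eq xz xu zu u_le2).
have yu : y \in diffset v u.
  have : 0 < #|diffset v u| by rewrite card_gt0; apply/set0Pn; exists z.
  move: meets; rewrite (negbTE xNu).
  by case: (y \in _) => //; rewrite muln0 leqn0 => /eqP ->.
by exists y, x; rewrite setUC -(set2_eq yz yu zu u_le2) eq_sym.
Qed.

End MaximalSimplex.

Theorem mainTheorem4 (n : nat) (hn : 3 <= n) (sigma : {set vertex n}) :
  VR_maximal_simplex 2 sigma ->
  (exists v : vertex n, sigma = closed_nbhd v) \/
  (exists (v : vertex n) (i0 j0 : 'I_n), i0 != j0 /\
     sigma = [set v; flip v [set i0]; flip v [set j0]; flip v [set i0; j0]]) \/
  (exists (v : vertex n) (i0 j0 k0 : 'I_n),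
     [/\ i0 != j0, j0 != k0 & i0 != k0] /\ sigma = Kv v i0 j0 k0).
Proof.
(* The argument does not use the bound [3 <= n]. *)
move=> sigma_max; have [[/set0Pn [v v_in] _] _] := sigma_max.
case: (boolP [forall t in sigma, hdist v t <= 1]) => [/forall_inP near_v | ].
  left; exists v; apply: maximal_eq (VR_closed_nbhd v) _ => //.
  by apply/subsetP => t t_in; rewrite mem_closed_nbhd near_v.
case/forall_inPn => w w_in far_w.
have [x [y [xy Dw]]] : exists x y, x != y /\ diffset v w = [set x; y].
  by apply/cards2P; rewrite eqn_leq -hdistE (maximal_diam sigma_max) // ltnNge.
rewrite -(flip_diffset v w) Dw in w_in.
case: (boolP [forall t in sigma, diffset v t \subset [set x; y]]) => [/forall_inP in_sq | ].
  right; left; exists v, x, y; split => //; apply: maximal_eq (VR_square v x y) _ => //.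
  by apply/subsetP => t t_in; apply/mem_square/in_sq.
case/forall_inPn => u u_in /subsetPn [z zu zNxy].
have [c [d [cdz cd_in cz_in]]] := diffset_new_coord sigma_max v_in xy w_in u_in zu zNxy.
by case: (maximal_closed_nbhd_or_Kv sigma_max v_in cdz cd_in cz_in); auto.
Qed.
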